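(* Consider the car-following system with state $x=(D,v,v_{\rm L})\in\mathbb{R}^3$: $$\dot D = v_{\rm L}-v,\qquad \dot v = u - p(v),\qquad \dot v_{\rm L} = a_{\rm L}.$$ Here $p$ is locally Lipschitz with $p(v)\ge0$, and $a_{\rm L}$ is the leader's acceleration, a given exogenous input. The system is driven by the connected cruise controller $$u=k_{\rm d}(x)=A\big(V(D)-v\big)+B\big(W(v_{\rm L})-v\big)+Ca_{\rm L}$$ with $A,B,C\ge 0$, where $$V(D)=\min\{\kappa(D-D_{\rm st}),v_{\rm max}\}, \qquad W(v_{\rm L})=\min\{v_{\rm L},v_{\rm max}\}.$$ The constants satisfy $\kappa>0$, $v_{\rm max}>0$ and $D_{\rm st}\in\mathbb{R}$. Let $D_{\rm sf}\in\mathbb{R}$ and $T_{\rm c}>0$, and set $\bar\kappa=1/T_{\rm c}$. Define $$\mathcal{S}_{\rm D}=\{x: D-D_{\rm sf}\ge0\},\qquad \mathcal{S}_{\rm TTC}=\{x:\bar\kappa(D-D_{\rm sf})+v_{\rm L}-v\ge 0\}.$$ Assume the following: - there is a class-$\mathcal{K}$ function $\gamma$ such that $a_{\rm L}(t)\ge-\gamma(v_{\rm L}(t))$ along the solution; - there is $\bar v\ge0$ such that $v(t),v_{\rm L}(t)\in[0,\bar v]$ along the solution; - $D_{\rm st}>D_{\rm sf}$, $\bar\kappa\ge\kappa$ and $C\le 1$; - the gains satisfy $$A\kappa(D_{\rm st}-D_{\rm sf})+\min\{0,B-\bar\kappa\}\,\bar v+\min_{v_{\rm L}\in[0,\bar v]}\Big[(\bar\kappa-B+A)v_{\rm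 L}-(1-C)\gamma(v_{\rm L})\Big]\ \ge\ 0.$$ Then the closed loop is safe with respect to $\mathcal{S}_{\rm D}\cap\mathcal{S}_{\rm TTC}$: every such solution with $x(0)\in\mathcal{S}_{\rm D}\cap\mathcal{S}_{\rm TTC}$ satisfies $x(t)\in\mathcal{S}_{\rm D}\cap\mathcal{S}_{\rm TTC}$ for all $t\ge 0$.
   Context: A function $\gamma:[0,\infty)\to[0,\infty)$ is of class $\mathcal{K}$ if it is continuous, strictly increasing, and satisfies $\gamma(0)=0$. Standing assumption: solutions of the closed loop system exist and are unique for all $t\ge0$. *)

From HB Require Import structures.
From mathcomp Require Import all_boot all_order all_algebra.
From mathcomp Require Import all_classical all_reals all_analysis.
Set Implicit Arguments. Unset Strict Implicit. Unset Printing Implicit Defensive.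
Import Order.TTheory GRing.Theory Num.Theory.
Import numFieldNormedType.Exports.
Local Open Scope classical_set_scope.
Local Open Scope ring_scope.

Definition class_K {R : realType} (gamma : R -> R) : Prop :=
  [/\ {within `[0, +oo[, continuous gamma},
      (forall a b : R, 0 <= a -> a < b -> gamma a < gamma b)
    & gamma 0 = 0].

Definition locally_lipschitz {R : realType} (p : R -> R) : Prop :=
  forall x : R, exists2 r : R, 0 < r & exists L : R,
    forall y z : R, `|y - x| < r -> `|z - x| < r -> `|p y - p z| <= L * `|y - z|.

Definition Vpol {R : realType} (kappa Dst vmax D : R) : R :=
  Num.min (kappa * (D - Dst)) vmax.

Definition Wpol {R : realType} (vmax vL : R) : R := Num.min vL vmax.

Definition kd {R : realType} (A B C kappa Dst vmax : R) (D v vL aL : R) : R :=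
  A * (Vpol kappa Dst vmax D - v) + B * (Wpol vmax vL - v) + C * aL.

Definition in_SD {R : realType} (Dsf D : R) : Prop := 0 <= D - Dsf.
Definition in_STTC {R : realType} (Tc Dsf D v vL : R) : Prop :=
  0 <= Tc^-1 * (D - Dsf) + vL - v.

(* With h1 := D - Dsf and h2 := h1 / Tc + vL - v, the dynamics give h1' = h2 - h1 / Tc,
   and the gain condition (after dropping the saturations of V and W, p >= 0 and
   aL >= - gamma vL) gives h2' >= A (1/Tc - kappa) h1 - A h2.  This is a cooperative
   linear differential inequality: the couplings are nonnegative, so the nonnegative
   quadrant is forward invariant.  Strict positivity propagates by integrating factors
   e^(c t) and real induction on [0, +oo); adding eps e^(lam t) to both functions makes
   the initial data strictly positive, and eps -> 0 gives the claim. *)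

From HB Require Import structures.
From mathcomp Require Import all_boot all_order all_algebra.
From mathcomp Require Import all_classical all_reals all_analysis.
From mathcomp Require Import ring lra.
Import Order.TTheory GRing.Theory Num.Theory.
Import numFieldNormedType.Exports.
Local Open Scope classical_set_scope.
Local Open Scope ring_scope.

Section HalfLine.
Context {R : realType}.

Lemma real_induction_ge0 (P : R -> Prop) :
  (forall T, 0 <= T -> (forall s, 0 <= s < T -> P s) -> P T) ->
  (forall T, 0 <= T -> (forall s, 0 <= s <= T -> P s) ->
     exists2 d, 0 < d & forall s, T < s <= T + d -> P s) ->
  forall t, 0 <= t -> P t.
Proof.
move=> closed cont t t0; apply: contrapT => nPt.
pose S := [set s | 0 <= s /\ forall r, 0 <= r <= s -> P r].
have P0 : P 0 by apply: closed => // s; lra.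
have S0 : S 0 by split => // r r0; have -> : r = 0 by lra.
have ubS : ubound S t.
  move=> s [s0 Ps]; rewrite leNgt; apply/negP => ts.
  by apply: nPt; apply: Ps; lra.
have supS : has_sup S by split; [exists 0 | exists t].
have T0 : 0 <= sup S by exact: sup_upper_bound.
have below : forall s, 0 <= s < sup S -> P s.
  move=> s /andP[s0 sT]; have [r [_ Pr] sr] := @sup_adherent _ S (sup S - s) ltac:(lra) supS.
  by apply: Pr; lra.
have ST : S (sup S).
  split=> // r /andP[r0]; rewrite le_eqVlt => /predU1P[->|rT].
  - exact: closed.
  - by apply: below; lra.
have [d d0 beyond] := cont _ T0 ST.2.
have : S (sup S + d).
  split; first lra.
  move=> r /andP[r0 rTd]; have [rT|Tr] := leP r (sup S).
  - by apply: ST.2; lra.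
  - by apply: beyond; lra.
move=> /(sup_upper_bound supS); lra.
Qed.

Lemma within_continuous_pos_right (f : R -> R) (x : R) :
  {within `[0, +oo[, continuous f} -> 0 <= x -> 0 < f x ->
  exists2 d, 0 < d & forall y, x <= y <= x + d -> 0 < f y.
Proof.
move=> /subspace_continuousP /(_ x) fcont x0 fx0.
have : `[0, +oo[%classic x by rewrite /= in_itv /= x0.
move=> /fcont /cvgrPdist_lt /(_ _ fx0).
rewrite near_withinE => /nbhs_ballP [d /= d0 near_x].
exists (d / 2) => [|y /andP[xy yx]]; first lra.
have : `|f x - f y| < f x.
  apply: near_x; last by rewrite /= in_itv /= andbT; lra.
  by rewrite /ball /= distrC ger0_norm; lra.
by rewrite ltr_norml; lra.
Qed.

Lemma is_derive_expRM (c x : R) :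
  is_derive x 1 (fun r => expR (c * r)) (c * expR (c * x)).
Proof.
have dcr : is_derive x 1 (fun r : R => c * r) c.
  by apply: is_derive_eq; exact: mulr1.
have := is_derive1_comp (is_derive_expR (c * x)) dcr.
by move=> /is_derive_eq; apply; rewrite mulrC.
Qed.

Lemma integrating_factor_pos (f df : R -> R) (c a b : R) :
  a < b -> (forall x, a <= x <= b -> is_derive x 1 f (df x)) ->
  (forall x, a < x < b -> 0 <= df x + c * f x) -> 0 < f a -> 0 < f b.
Proof.
move=> ab fder fineq fa0.
pose g r := expR (c * r) * f r.
pose dg r := expR (c * r) * (df r + c * f r).
have gder x : a <= x <= b -> is_derive x 1 g (dg x).
  move=> xab; apply: is_derive_eq; first exact: is_deriveM (is_derive_expRM c x) (fder x xab).
  by rewrite /dg /= /GRing.scale /=; ring.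
have gcont : {within `[a, b], continuous g}.
  apply: derivable_within_continuous => y; rewrite in_itv /= => yab.
  by have [] := gder y yab.
have gder' y : y \in `]a, b[ -> is_derive y 1 g (dg y).
  by rewrite in_itv /= => /andP[ay yb]; apply: gder; lra.
have [y] := MVT ab gder' gcont.
rewrite in_itv /= => /andP[ay yb] gab.
have dg0 : 0 <= dg y by apply: mulr_ge0; [exact: expR_ge0 | apply: fineq; lra].
have ga0 : 0 < g a by apply: mulr_gt0; first exact: expR_gt0.
have : 0 < g b.
  have : 0 <= dg y * (b - a) by apply: mulr_ge0 => //; lra.
  lra.
by rewrite /g pmulr_rgt0 // expR_gt0.
Qed.

End HalfLine.

Section CooperativePositivity.
Context {R : realType}.
Variables (h1 h2 d1 d2 : R -> R) (c1 c2 b12 b21 : R).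
Hypotheses (h1_cont : {within `[0, +oo[, continuous h1})
           (h2_cont : {within `[0, +oo[, continuous h2}).
Hypotheses (h1_der : forall t : R, 0 < t -> is_derive t 1 h1 (d1 t))
           (h2_der : forall t : R, 0 < t -> is_derive t 1 h2 (d2 t)).
Hypotheses (b12_ge0 : 0 <= b12) (b21_ge0 : 0 <= b21).
Hypotheses (h1_ineq : forall t : R, 0 < t -> b12 * h2 t <= d1 t + c1 * h1 t)
           (h2_ineq : forall t : R, 0 < t -> b21 * h1 t <= d2 t + c2 * h2 t).

Lemma cooperative_pos : 0 < h1 0 -> 0 < h2 0 ->
  forall t, 0 <= t -> 0 < h1 t /\ 0 < h2 t.
Proof.
move=> h10 h20; apply: real_induction_ge0 => [T|T T0 upto].
  rewrite le_eqVlt => /predU1P[<- //|T0 below].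
  have [h1_mid h2_mid] : 0 < h1 (T / 2) /\ 0 < h2 (T / 2) by apply: below; lra.
  split.
  - apply: (@integrating_factor_pos _ h1 d1 c1 (T / 2)) => //; first lra.
      by move=> x x_itv; apply: h1_der; lra.
    move=> x x_itv; have [_ h2x] : 0 < h1 x /\ 0 < h2 x by apply: below; lra.
    by apply: le_trans (h1_ineq x _); [exact: mulr_ge0 b12_ge0 (ltW h2x) | lra].
  - apply: (@integrating_factor_pos _ h2 d2 c2 (T / 2)) => //; first lra.
      by move=> x x_itv; apply: h2_der; lra.
    move=> x x_itv; have [h1x _] : 0 < h1 x /\ 0 < h2 x by apply: below; lra.
    by apply: le_trans (h2_ineq x _); [exact: mulr_ge0 b21_ge0 (ltW h1x) | lra].
have [h1T h2T] : 0 < h1 T /\ 0 < h2 T by apply: upto; lra.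
have [e1 e1_gt0 h1_right] := within_continuous_pos_right _ _ h1_cont T0 h1T.
have [e2 e2_gt0 h2_right] := within_continuous_pos_right _ _ h2_cont T0 h2T.
exists (Num.min e1 e2) => [|s /andP[Ts sTe]]; first by rewrite lt_min e1_gt0.
have : Num.min e1 e2 <= e1 by rewrite ge_min lexx.
have : Num.min e1 e2 <= e2 by rewrite ge_min lexx orbT.
by split; [apply: h1_right | apply: h2_right]; lra.
Qed.

End CooperativePositivity.

Section CooperativeInvariance.
Context {R : realType}.
Variables (h1 h2 d1 d2 : R -> R) (c1 c2 b12 b21 : R).
Hypotheses (h1_cont : {within `[0, +oo[, continuous h1})
           (h2_cont : {within `[0, +oo[, continuous h2}).
Hypotheses (h1_der : forall t : R, 0 < t -> is_derive t 1 h1 (d1 t))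
           (h2_der : forall t : R, 0 < t -> is_derive t 1 h2 (d2 t)).
Hypotheses (b12_ge0 : 0 <= b12) (b21_ge0 : 0 <= b21).
Hypotheses (h1_ineq : forall t : R, 0 < t -> b12 * h2 t <= d1 t + c1 * h1 t)
           (h2_ineq : forall t : R, 0 < t -> b21 * h1 t <= d2 t + c2 * h2 t).

Lemma cooperative_nonneg : 0 <= h1 0 -> 0 <= h2 0 ->
  forall t, 0 <= t -> 0 <= h1 t /\ 0 <= h2 t.
Proof.
move=> h10 h20 t t0.
pose lam := Num.max (b12 - c1) (b21 - c2).
have lam1 : b12 - c1 <= lam by rewrite le_max lexx.
have lam2 : b21 - c2 <= lam by rewrite le_max lexx orbT.
pose e r := expR (lam * r).
have e_gt0 r : 0 < e r by exact: expR_gt0.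
suff perturbed eps : 0 < eps -> 0 < h1 t + eps * e t /\ 0 < h2 t + eps * e t.
  split; apply/ler_addgt0Pr => eps eps0.
  - by have := (perturbed (eps / e t) (divr_gt0 eps0 (e_gt0 t))).1; rewrite divfK ?gt_eqF //; lra.
  - by have := (perturbed (eps / e t) (divr_gt0 eps0 (e_gt0 t))).2; rewrite divfK ?gt_eqF //; lra.
move=> eps0.
(* lam absorbs the couplings, so the perturbed pair still satisfies the inequalities. *)
have eps_e_der (r : R) : is_derive r 1 (fun r => eps * e r) (eps * (lam * e r)).
  by apply: is_deriveZ; exact: is_derive_expRM.
have pert_cont (h : R -> R) : {within `[0, +oo[, continuous h} ->
    {within `[0, +oo[, continuous (fun r => h r + eps * e r)}.
  move=> h_cont; apply: (within_continuousD (f := h) (g := fun r => eps * e r)) => //.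
  apply: derivable_within_continuous => x _.
  by have [] := eps_e_der x.
have pert_der (h dh : R -> R) (r : R) : is_derive r 1 h (dh r) ->
    is_derive r 1 (fun r => h r + eps * e r) (dh r + eps * (lam * e r)).
  by move=> h_der; apply: is_deriveD.
have ineq1 (r : R) : 0 < r -> b12 * (h2 r + eps * e r) <=
    d1 r + eps * (lam * e r) + c1 * (h1 r + eps * e r).
  move=> r0; have := h1_ineq r r0.
  have : 0 <= eps * e r * (lam - (b12 - c1)).
    by apply: mulr_ge0; [exact: ltW (mulr_gt0 eps0 (e_gt0 r)) | lra].
  lra.
have ineq2 (r : R) : 0 < r -> b21 * (h1 r + eps * e r) <=
    d2 r + eps * (lam * e r) + c2 * (h2 r + eps * e r).
  move=> r0; have := h2_ineq r r0.
  have : 0 <= eps * e r * (lam - (b21 - c2)).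
    by apply: mulr_ge0; [exact: ltW (mulr_gt0 eps0 (e_gt0 r)) | lra].
  lra.
have e0 : e 0 = 1 by rewrite /e mulr0 expR0.
apply: (@cooperative_pos _ (fun r => h1 r + eps * e r) (fun r => h2 r + eps * e r)
  (fun r => d1 r + eps * (lam * e r)) (fun r => d2 r + eps * (lam * e r))
  c1 c2 b12 b21) => //.
- exact: pert_cont.
- exact: pert_cont.
- by move=> r r0; apply: pert_der; exact: h1_der.
- by move=> r r0; apply: pert_der; exact: h2_der.
- by rewrite e0; lra.
- by rewrite e0; lra.
Qed.
End CooperativeInvariance.


Lemma kd_ttc_rate_ge {R : realType}
    (A B C kappa vmax Dst Dsf k vbar g aL pv D v vL : R) :
  0 <= A -> 0 <= B -> C <= 1 -> 0 <= pv -> - g <= aL -> 0 <= v <= vbar ->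
  0 <= A * kappa * (Dst - Dsf) + Num.min 0 (B - k) * vbar
       + ((k - B + A) * vL - (1 - C) * g) ->
  A * (k - kappa) * (D - Dsf) <=
  k * (vL - v) + aL - (kd A B C kappa Dst vmax D v vL aL - pv)
  + A * (k * (D - Dsf) + vL - v).
Proof.
move=> A_ge0 B_ge0 C_le1 pv_ge0 aL_ge /andP[v_ge0 v_le] gains.
have V_le : A * Vpol kappa Dst vmax D <= A * (kappa * (D - Dst)).
  by apply: ler_wpM2l => //; rewrite ge_min lexx.
have W_le : B * Wpol vmax vL <= B * vL.
  by apply: ler_wpM2l => //; rewrite ge_min lexx.
have aL_term : (1 - C) * - g <= (1 - C) * aL by apply: ler_wpM2l => //; lra.
have v_term : Num.min 0 (B - k) * vbar <= (B - k) * v.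
  have [Bk|Bk] := leP 0 (B - k); first by rewrite mul0r mulr_ge0.
  by rewrite ler_wnM2l // ltW.
rewrite /kd; lra.
Qed.

Theorem theorem4 (R : realType)
  (p gamma : R -> R) (A B C kappa vmax Dst Dsf Tc vbar : R)
  (D v vL aL : R -> R) :
  locally_lipschitz p -> (forall s : R, 0 <= p s) ->
  0 <= A -> 0 <= B -> 0 <= C ->
  0 < kappa -> 0 < vmax -> 0 < Tc ->
  {within `[0, +oo[, continuous D} ->
  {within `[0, +oo[, continuous v} ->
  {within `[0, +oo[, continuous vL} ->
  (forall t : R, 0 < t -> is_derive t 1 D (vL t - v t)) ->
  (forall t : R, 0 < t -> is_derive t 1 v
       (kd A B C kappa Dst vmax (D t) (v t) (vL t) (aL t) - p (v t))) ->
  (forall t : R, 0 < t -> is_derive t 1 vL (aL t)) ->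
  class_K gamma ->
  (forall t : R, 0 <= t -> - gamma (vL t) <= aL t) ->
  0 <= vbar ->
  (forall t : R, 0 <= t -> 0 <= v t <= vbar /\ 0 <= vL t <= vbar) ->
  Dsf < Dst -> kappa <= Tc^-1 -> C <= 1 ->
  (forall y : R, 0 <= y <= vbar ->
     0 <= A * kappa * (Dst - Dsf) + Num.min 0 (B - Tc^-1) * vbar
          + ((Tc^-1 - B + A) * y - (1 - C) * gamma y)) ->
  in_SD Dsf (D 0) -> in_STTC Tc Dsf (D 0) (v 0) (vL 0) ->
  forall t : R, 0 <= t -> in_SD Dsf (D t) /\ in_STTC Tc Dsf (D t) (v t) (vL t).
Proof.
move=> _ p_ge0 A_ge0 B_ge0 _ _ _ _ D_cont v_cont vL_cont D_der v_der vL_der _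
  aL_ge _ bounds _ kappa_le C_le1 gains SD0 STTC0.
set k := Tc^-1 in kappa_le gains STTC0 *.
pose h1 t := D t - Dsf.
pose h2 t := k * h1 t + vL t - v t.
have h1_cont : {within `[0, +oo[, continuous h1}.
  by apply: (within_continuousB (f := D) (g := cst Dsf)) => // x; exact: cst_continuous.
have h2_cont : {within `[0, +oo[, continuous h2}.
  apply: (within_continuousB (g := v)) => //.
  apply: (within_continuousD (g := vL)) => // x.
  by apply: (continuousM (s := cst k)); [exact: cst_continuous | exact: h1_cont].
pose dv t := kd A B C kappa Dst vmax (D t) (v t) (vL t) (aL t) - p (v t).
have h1_der (t : R) : 0 < t -> is_derive t 1 h1 (vL t - v t).
  move=> t_gt0; apply: is_derive_eq; first exact: is_deriveB (D_der t t_gt0) (is_derive_cst _ _ _).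
  by rewrite subr0.
have h2_der (t : R) : 0 < t -> is_derive t 1 h2 (k * (vL t - v t) + aL t - dv t).
  move=> t_gt0; apply: is_deriveB; last exact: v_der.
  by apply: is_deriveD; [apply: is_deriveZ; exact: h1_der | exact: vL_der].
apply: (@cooperative_nonneg _ h1 h2 _ _ k A 1 (A * (k - kappa))
  h1_cont h2_cont h1_der h2_der ler01) => //.
- by apply: mulr_ge0 => //; lra.
- by move=> t _; rewrite /h2; lra.
- move=> t /ltW t_ge0; have [v_bnd vL_bnd] := bounds t t_ge0.
  exact: kd_ttc_rate_ge (p_ge0 _) (aL_ge t t_ge0) v_bnd (gains _ vL_bnd).
Qed.
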